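(* Let $\succ$ be a binary relation on $\mathcal{F}$. Then $\succ$ satisfies Axioms A1, A2, A3, A5, A6, A7 below if and only if there exist a non-constant affine function $u:X\to\mathbb{R}$, unique up to positive affine transformation, and a unique pair of monotonic constant-linear functionals $I_p,I_o:B_0(\Sigma)\to\mathbb{R}$ with $I_p(u(h))\le I_o(u(h))$ for all $h\in\mathcal{F}$, such that for all $f,g\in\mathcal{F}$, $$f\succ g\iff\begin{cases}I_p(u(f))>I_p(u(g)),\\ I_o(u(f))>I_o(u(g)).\end{cases}$$ Axioms: (A1) $\succ$ is asymmetric and transitive, and its restriction to $X$ is non-trivial and negatively transitive. (A2) For all $f,g,h\in\mathcal{F}$, $\{\alpha\in[0,1]:\alpha f+(1-\alpha)g\succ h\}$ and $\{\alpha\in[0,1]:h\succ\alpha f+(1-\alpha)g\}$ are open in $[0,1]$. (A3) For all $f,g\in\mathcal{F}$, $x\in X$, $\alpha\in(0,1)$: $f\succ g$ iff $\alpha f+(1-\alpha)x\succ\alpha g+(1-\alpha)x$. (A5) If $f(s)\succ g(s)$ for all $s\in S$ then $f\succ g$. (A6) If for all $x\in X$, $f\Join x$ implies $g\Join x$, then $f\Join g$. (A7) If $f\Join x$, $x\succ g$, $g\Join y$, $f\succ y$ (with $x,y\in X$), then $f\succ g$.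
   Context: $S$ is a set of states with algebra $\Sigma$; $X$ is a non-singleton convex subset of a real vector space; $\mathcal{F}$ is the set of simple acts $f:S\to X$ ($\Sigma$-measurable, finitely many values) with pointwise mixtures; elements of $X$ are identified with constant acts. $f\Join g$ means $f\not\succ g$ and $g\not\succ f$. $B_0(\Sigma)$ is the set of real-valued $\Sigma$-measurable simple functions on $S$; $u(f)$ denotes $s\mapsto u(f(s))\in B_0(\Sigma)$. A functional $I:B_0(\Sigma)\to\mathbb{R}$ is constant-linear if $I(a\varphi+b)=aI(\varphi)+b$ for all $\varphi\in B_0(\Sigma)$, $a\ge0$, $b\in\mathbb{R}$ ($b$ the constant function), and monotonic if $\varphi\ge\psi$ pointwise implies $I(\varphi)\ge I(\psi)$. *)

From HB Require Import structures.
From mathcomp Require Import all_boot all_order all_algebra.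
From mathcomp Require Import Rstruct.
Set Implicit Arguments. Unset Strict Implicit. Unset Printing Implicit Defensive.
Import Order.TTheory GRing.Theory Num.Theory.
Local Open Scope ring_scope.

Notation Real := Rdefinitions.R.

Definition is_algebra (S : Type) (Sig : (S -> Prop) -> Prop) : Prop :=
  Sig (fun _ => False) /\
  (forall A, Sig A -> Sig (fun s => ~ A s)) /\
  (forall A B, Sig A -> Sig B -> Sig (fun s => A s \/ B s)).

Definition simple_meas (S : Type) (Sig : (S -> Prop) -> Prop) (T : eqType)
  (f : S -> T) : Prop :=
  (exists l : seq T, forall s, f s \in l) /\
  (forall t : T, Sig (fun s => f s = t)).

Definition is_act (S : Type) (Sig : (S -> Prop) -> Prop) (V : lmodType Real)
  (X : V -> Prop) (f : S -> V) : Prop :=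
  simple_meas Sig f /\ forall s, X (f s).

Definition B0 (S : Type) (Sig : (S -> Prop) -> Prop) (phi : S -> Real) : Prop :=
  simple_meas Sig phi.

Definition convex_set (V : lmodType Real) (X : V -> Prop) : Prop :=
  forall x y (a : Real), X x -> X y -> 0 <= a <= 1 -> X (a *: x + (1 - a) *: y).

Definition non_singleton (V : lmodType Real) (X : V -> Prop) : Prop :=
  exists x y, X x /\ X y /\ x <> y.

Definition mix (S : Type) (V : lmodType Real) (a : Real) (f g : S -> V) : S -> V :=
  fun s => a *: f s + (1 - a) *: g s.
Definition cst (S : Type) (V : lmodType Real) (x : V) : S -> V := fun _ => x.
Arguments cst S {V} x.

Definition incomp (A : Type) (P : A -> A -> Prop) (f g : A) : Prop :=
  ~ P f g /\ ~ P g f.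

Definition open_in_unit (O : Real -> Prop) : Prop :=
  forall a, 0 <= a <= 1 -> O a ->
    exists e : Real, 0 < e /\
      forall b, 0 <= b <= 1 -> `|b - a| < e -> O b.


Definition A1 (S : Type) (Sig : (S -> Prop) -> Prop) (V : lmodType Real)
  (X : V -> Prop) (P : (S -> V) -> (S -> V) -> Prop) : Prop :=
  let act := is_act Sig X in
  (forall f g, act f -> act g -> P f g -> ~ P g f) /\
  (forall f g h, act f -> act g -> act h -> P f g -> P g h -> P f h) /\
  (exists x y, X x /\ X y /\ P (cst S x) (cst S y)) /\
  (forall x y z, X x -> X y -> X z -> P (cst S x) (cst S y) ->
     P (cst S x) (cst S z) \/ P (cst S z) (cst S y)).

Definition A2 (S : Type) (Sig : (S -> Prop) -> Prop) (V : lmodType Real)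
  (X : V -> Prop) (P : (S -> V) -> (S -> V) -> Prop) : Prop :=
  let act := is_act Sig X in
  forall f g h, act f -> act g -> act h ->
    open_in_unit (fun a => P (mix a f g) h) /\
    open_in_unit (fun a => P h (mix a f g)).

Definition A3 (S : Type) (Sig : (S -> Prop) -> Prop) (V : lmodType Real)
  (X : V -> Prop) (P : (S -> V) -> (S -> V) -> Prop) : Prop :=
  let act := is_act Sig X in
  forall f g x (a : Real), act f -> act g -> X x -> 0 < a < 1 ->
    (P f g <-> P (mix a f (cst S x)) (mix a g (cst S x))).

Definition A5 (S : Type) (Sig : (S -> Prop) -> Prop) (V : lmodType Real)
  (X : V -> Prop) (P : (S -> V) -> (S -> V) -> Prop) : Prop :=
  let act := is_act Sig X in
  forall f g, act f -> act g ->
    (forall s, P (cst S (f s)) (cst S (g s))) -> P f g.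

Definition A6 (S : Type) (Sig : (S -> Prop) -> Prop) (V : lmodType Real)
  (X : V -> Prop) (P : (S -> V) -> (S -> V) -> Prop) : Prop :=
  let act := is_act Sig X in
  forall f g, act f -> act g ->
    (forall x, X x -> incomp P f (cst S x) -> incomp P g (cst S x)) ->
    incomp P f g.

Definition A7 (S : Type) (Sig : (S -> Prop) -> Prop) (V : lmodType Real)
  (X : V -> Prop) (P : (S -> V) -> (S -> V) -> Prop) : Prop :=
  let act := is_act Sig X in
  forall f g x y, act f -> act g -> X x -> X y ->
    incomp P f (cst S x) -> P (cst S x) g -> incomp P g (cst S y) ->
    P f (cst S y) -> P f g.


Definition affine_on (V : lmodType Real) (X : V -> Prop) (u : V -> Real) : Prop :=
  forall x y (a : Real), X x -> X y -> 0 <= a <= 1 ->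
    u (a *: x + (1 - a) *: y) = a * u x + (1 - a) * u y.

Definition nonconstant_on (V : lmodType Real) (X : V -> Prop) (u : V -> Real) : Prop :=
  exists x y, X x /\ X y /\ u x <> u y.

Definition const_linear (S : Type) (Sig : (S -> Prop) -> Prop)
  (I : (S -> Real) -> Real) : Prop :=
  forall phi (a b : Real), B0 Sig phi -> 0 <= a ->
    I (fun s => a * phi s + b) = a * I phi + b.

Definition monotonic (S : Type) (Sig : (S -> Prop) -> Prop)
  (I : (S -> Real) -> Real) : Prop :=
  forall phi psi, B0 Sig phi -> B0 Sig psi ->
    (forall s, psi s <= phi s) -> I psi <= I phi.

Definition represents (S : Type) (Sig : (S -> Prop) -> Prop) (V : lmodType Real)
  (X : V -> Prop) (P : (S -> V) -> (S -> V) -> Prop)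
  (u : V -> Real) (Ip Io : (S -> Real) -> Real) : Prop :=
  affine_on X u /\ nonconstant_on X u /\
  const_linear Sig Ip /\ monotonic Sig Ip /\
  const_linear Sig Io /\ monotonic Sig Io /\
  (forall h, is_act Sig X h -> Ip (fun s => u (h s)) <= Io (fun s => u (h s))) /\
  (forall f g, is_act Sig X f -> is_act Sig X g ->
     (P f g <->
       (Ip (fun s => u (g s)) < Ip (fun s => u (f s)) /\
        Io (fun s => u (g s)) < Io (fun s => u (f s))))).

(* On constant acts, A1-A3 are the von Neumann-Morgenstern axioms, so an affine u represents
   the preference on X. For an act f, the utilities of the constants that f beats form an
   initial segment of u(X) whose supremum is the lower certainty equivalent of f; with A2, A3
   and A5 it is monotone and constant-affine in u o f, and rescaling extends it to a
   functional Ip on B0. The same construction for the converse preference and -u gives the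
   upper certainty equivalent Io >= Ip. Axioms A6 and A7 say precisely that f beats g iff
   both certainty equivalents of f exceed those of g. Both functionals are determined by
   the comparisons with constants, which gives uniqueness. *)

From Stdlib Require Import ClassicalEpsilon FunctionalExtensionality PropExtensionality Classical.
From Stdlib Require Raxioms.
From mathcomp Require Import all_boot all_order all_algebra.
From mathcomp Require Import Rstruct.
From mathcomp Require Import ring lra.
Set Implicit Arguments. Unset Strict Implicit. Unset Printing Implicit Defensive.
Import Order.TTheory GRing.Theory Num.Theory.
Local Open Scope ring_scope.

Lemma has_sup (E : Real -> Prop) (M : Real) :
  (exists x, E x) -> (forall x, E x -> x <= M) ->
  exists m, (forall x, E x -> x <= m) /\ (forall b, (forall x, E x -> x <= b) -> m <= b).
Proof.
move=> hne hM.
have [|m [hub hlub]] := @Raxioms.completeness E _ hne.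
  by exists M => x /hM /RleP.
exists m; split; first by move=> x /hub /RleP.
by move=> b hb; apply/RleP; apply: hlub => x /hb /RleP.
Qed.

Lemma ltr_norml_of (d e : Real) : - e < d -> d < e -> `|d| < e.
Proof. by move=> h1 h2; rewrite ltr_norml h1 h2. Qed.

Lemma point_above_close (m e hi : Real) : m < hi -> 0 < e ->
  exists t, m < t /\ t < hi /\ t - m < e.
Proof.
move=> h1 h2; case: (lerP e (hi - m)) => h.
  by exists (m + e / 2); split; [|split]; lra.
by exists (m + (hi - m) / 2); split; [|split]; lra.
Qed.

Lemma point_below_close (m e lo : Real) : lo < m -> 0 < e ->
  exists t, lo < t /\ t < m /\ m - t < e.
Proof.
move=> h1 h2; case: (lerP e (m - lo)) => h.
  by exists (m - e / 2); split; [|split]; lra.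
by exists (m - (m - lo) / 2); split; [|split]; lra.
Qed.

Lemma divr_in01 (a b : Real) : 0 <= a -> a <= b -> 0 < b -> 0 <= a / b <= 1.
Proof.
by move=> a0 ab b0; apply/andP; split; [apply: divr_ge0 => //; apply: ltW | rewrite ler_pdivrMr // mul1r].
Qed.

Lemma half_in01 : 0 < (1 / 2 : Real) < 1.
Proof. by apply/andP; split; lra. Qed.

Lemma half_in01W : 0 <= (1 / 2 : Real) <= 1.
Proof. by apply/andP; split; lra. Qed.

Lemma open_in_unit_ext (A B : Real -> Prop) :
  (forall a, 0 <= a <= 1 -> (A a <-> B a)) -> open_in_unit B -> open_in_unit A.
Proof.
move=> hAB hB a ha hA; have [|e [e0 he]] := hB a ha; first exact/hAB.
by exists e; split => // b hb hbe; apply/hAB => //; apply: he.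
Qed.

Lemma open_in_unit_and (A B : Real -> Prop) : open_in_unit A -> open_in_unit B ->
  open_in_unit (fun a => A a /\ B a).
Proof.
move=> hA hB a ha [h1 h2].
have [e1 [e10 he1]] := hA a ha h1; have [e2 [e20 he2]] := hB a ha h2.
exists (Order.min e1 e2); split; first by rewrite lt_min e10.
move=> b hb; rewrite lt_min => /andP [b1 b2]; split; [exact: he1 | exact: he2].
Qed.

Section ConvexCombination.
Variable V : lmodType Real.
Implicit Types x y b w : V.

Lemma mixv1 x y : 1 *: x + (1 - 1) *: y = x.
Proof. by rewrite subrr scale0r addr0 scale1r. Qed.

Lemma mixv0 x y : 0 *: x + (1 - 0) *: y = y.
Proof. by rewrite scale0r add0r subr0 scale1r. Qed.

Lemma mixvv (a : Real) x : a *: x + (1 - a) *: x = x.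
Proof. by rewrite -scalerDl addrC subrK scale1r. Qed.

Lemma mixvC (a : Real) x y : a *: x + (1 - a) *: y = (1 - a) *: y + (1 - (1 - a)) *: x.
Proof. by rewrite addrC; congr (_ + _ *: _); ring. Qed.

Lemma mixv_mix (c t s : Real) b w :
  c *: (t *: b + (1 - t) *: w) + (1 - c) *: (s *: b + (1 - s) *: w)
  = (c * t + (1 - c) * s) *: b + (1 - (c * t + (1 - c) * s)) *: w.
Proof.
rewrite !scalerDr !scalerA addrACA -!scalerDl.
by congr (_ *: _ + _ *: _); ring.
Qed.

End ConvexCombination.

Lemma mix1f (S : Type) (V : lmodType Real) (f g : S -> V) : mix 1 f g = f.
Proof. by apply: functional_extensionality => s; rewrite /mix mixv1. Qed.

(** * Simple acts *)

Section Measurability.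
Variables (S : Type) (Sig : (S -> Prop) -> Prop).
Hypothesis HSig : is_algebra Sig.

Lemma Sig_ext (A B : S -> Prop) : Sig A -> (forall s, A s <-> B s) -> Sig B.
Proof.
move=> hA hAB; suff <- : A = B by [].
by apply: functional_extensionality => s; apply: propositional_extensionality.
Qed.

Lemma Sig_not A : Sig A -> Sig (fun s => ~ A s).
Proof. by case: HSig => _ [hc _]; apply: hc. Qed.

Lemma Sig_or A B : Sig A -> Sig B -> Sig (fun s => A s \/ B s).
Proof. by case: HSig => _ [_ hu]; apply: hu. Qed.

Lemma Sig_and A B : Sig A -> Sig B -> Sig (fun s => A s /\ B s).
Proof.
move=> hA hB; apply: Sig_ext (Sig_not (Sig_or (Sig_not hA) (Sig_not hB))) _ => s.
by split=> [/not_or_and [/NNPP ? /NNPP ?] | [? ?] []].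
Qed.

Lemma Sig_const (Q : Prop) : Sig (fun _ => Q).
Proof.
have S0 : Sig (fun _ => False) by case: HSig.
have [hQ | hQ] := classic Q.
  by apply: Sig_ext (Sig_not S0) _ => s; tauto.
by apply: Sig_ext S0 _ => s; tauto.
Qed.

Lemma simple_preimage (T : eqType) (phi : S -> T) :
  simple_meas Sig phi -> forall Q : T -> Prop, Sig (fun s => Q (phi s)).
Proof.
case=> [[l hl] hlev] Q.
suff H : forall l' : seq T, Sig (fun s => phi s \in l' /\ Q (phi s)).
  by apply: Sig_ext (H l) _ => s; split => [[]|] //; split.
elim=> [|v l' IH].
  by apply: Sig_ext (Sig_const False) _ => s; rewrite in_nil; split => //; case.
apply: Sig_ext (Sig_or (Sig_and (hlev v) (Sig_const (Q v))) IH) _ => s.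
rewrite in_cons; split => [[[-> hq] | [-> hq]] | [/orP [/eqP -> | h] hq]].
- by rewrite eqxx.
- by rewrite orbT.
- by left.
- by right.
Qed.

Lemma simple_comp (T T' : eqType) (phi : S -> T) (F : T -> T') :
  simple_meas Sig phi -> simple_meas Sig (fun s => F (phi s)).
Proof.
move=> h; split; last by move=> t; apply: (simple_preimage h (fun v => F v = t)).
by case: h => [[l hl] _]; exists (map F l) => s; apply: map_f.
Qed.

Lemma simple_comp2 (T T' T'' : eqType) (phi : S -> T) (psi : S -> T') (F : T -> T' -> T'') :
  simple_meas Sig phi -> simple_meas Sig psi -> simple_meas Sig (fun s => F (phi s) (psi s)).
Proof.
move=> h1 h2; have hpair : simple_meas Sig (fun s => (phi s, psi s)).
  split; last first.
    move=> [a b]; apply: Sig_ext (Sig_and (h1.2 a) (h2.2 b)) _ => s.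
    by split => [[-> ->] | [-> ->]].
  case: h1 => [[l1 hl1] _]; case: h2 => [[l2 hl2] _].
  by exists [seq (x, y) | x <- l1, y <- l2] => s; apply: allpairs_f.
exact: (simple_comp (fun p => F p.1 p.2) hpair).
Qed.

Lemma simple_cst (T : eqType) (x : T) : simple_meas Sig (fun _ : S => x).
Proof. by split; [exists [:: x] => s; rewrite mem_seq1 | move=> t; apply: Sig_const]. Qed.

Lemma simple_bounded (phi : S -> Real) : simple_meas Sig phi ->
  exists K : Real, 0 < K /\ forall s, `|phi s| <= K.
Proof.
case=> [[l hl] _]; exists (1 + \sum_(v <- l) `|v|); split.
  by apply: (lt_le_trans ltr01); rewrite lerDl sumr_ge0.
move=> s; suff h : `|phi s| <= \sum_(v <- l) `|v|.
  by apply: le_trans h _; rewrite lerDr ler01.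
move: (hl s); elim: l {hl} => [|v l IH] //; rewrite in_cons big_cons => /orP [/eqP <- | /IH h].
  by rewrite lerDl sumr_ge0.
by rewrite (le_trans h) // lerDr.
Qed.

Lemma simple_argmin (T : eqType) (phi : S -> T) (g : T -> Real) (s0 : S) :
  simple_meas Sig phi -> exists sm, forall s, g (phi sm) <= g (phi s).
Proof.
case=> [[l hl] _].
suff [sm hsm] : exists sm, forall s, phi s \in l -> g (phi sm) <= g (phi s).
  by exists sm => s; apply: hsm.
elim: l {hl} => [|v l [sm IH]]; first by exists s0.
have [[s1 [e1 h1]] | hn] := classic (exists s1, phi s1 = v /\ g v < g (phi sm)).
  exists s1 => s; rewrite in_cons e1 => /orP [/eqP -> // | h].
  exact: le_trans (ltW h1) (IH _ h).
exists sm => s; rewrite in_cons => /orP [/eqP e | h]; last exact: IH.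
by rewrite leNgt; apply/negP => hlt; apply: hn; exists s; rewrite -e.
Qed.

Lemma simple_argmax (T : eqType) (phi : S -> T) (g : T -> Real) (s0 : S) :
  simple_meas Sig phi -> exists sm, forall s, g (phi s) <= g (phi sm).
Proof.
move=> h; have [sm hsm] := simple_argmin (fun t => - g t) s0 h.
by exists sm => s; have := hsm s; rewrite lerN2.
Qed.

End Measurability.

Section Acts.
Variables (S : Type) (Sig : (S -> Prop) -> Prop) (V : lmodType Real) (X : V -> Prop).
Hypotheses (HSig : is_algebra Sig) (Hconv : convex_set X).
Local Notation act := (is_act Sig X).

Lemma act_cst x : X x -> act (cst S x).
Proof. by move=> hx; split; [apply: simple_cst | move=> s]. Qed.

Lemma act_mix f g (a : Real) : act f -> act g -> 0 <= a <= 1 -> act (mix a f g).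
Proof.
move=> [hf hfX] [hg hgX] ha; split; last by move=> s; apply: Hconv.
exact: (simple_comp2 HSig (fun v w => a *: v + (1 - a) *: w) hf hg).
Qed.

Lemma B0_comp_act (u : V -> Real) f : act f -> B0 Sig (fun s => u (f s)).
Proof. by case=> hf _; apply: simple_comp. Qed.

Definition u_range (u : V -> Real) (t : Real) := exists2 x, X x & u x = t.

Section Utility.
Variable u : V -> Real.
Hypothesis Haff : affine_on X u.

Lemma u_mix f g (a : Real) : act f -> act g -> 0 <= a <= 1 ->
  forall s, u (mix a f g s) = a * u (f s) + (1 - a) * u (g s).
Proof. by move=> [_ hf] [_ hg] ha s; rewrite /mix Haff. Qed.

Lemma u_mix_cst f x (a : Real) : act f -> X x -> 0 <= a <= 1 ->
  forall s, u (mix a f (cst S x) s) = a * u (f s) + (1 - a) * u x.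
Proof. by move=> [_ hf] hx ha s; rewrite /mix /cst Haff. Qed.

Lemma u_range_between a b t : u_range u a -> u_range u b -> a <= t <= b -> u_range u t.
Proof.
move=> [xa hxa <-] [xb hxb <-] /andP [h1 h2].
have [e | ne] := eqVneq (u xa) (u xb).
  by exists xa => //; apply/eqP; rewrite eq_le h1 e h2.
have d : 0 < u xb - u xa by rewrite subr_gt0 lt_neqAle ne (le_trans h1 h2).
have hc : 0 <= (t - u xa) / (u xb - u xa) <= 1 by apply: divr_in01; lra.
exists (((t - u xa) / (u xb - u xa)) *: xb + (1 - (t - u xa) / (u xb - u xa)) *: xa).
  exact: Hconv.
by rewrite Haff //; field; rewrite gt_eqF.
Qed.

Variables (z0 z1 : V).
Hypotheses (Hz0 : X z0) (Hz1 : X z1) (Hz01 : u z0 < u z1).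

(* Rescaling [phi] into [0,1] and mixing z1 with z0 accordingly. *)
Lemma B0_affine_u phi (K : Real) : B0 Sig phi -> 0 < K -> (forall s, `|phi s| <= K) ->
  exists2 f, act f & forall s,
    phi s = 2 * K / (u z1 - u z0) * u (f s) + (- K - 2 * K / (u z1 - u z0) * u z0).
Proof.
move=> hphi K0 hK.
have hc : forall s, 0 <= (phi s + K) / (2 * K) <= 1.
  by move=> s; move: (hK s); rewrite ler_norml => /andP [h1 h2]; apply: divr_in01; lra.
pose F v := (v + K) / (2 * K) *: z1 + (1 - (v + K) / (2 * K)) *: z0.
exists (fun s => F (phi s)).
  by split; [apply: simple_comp | move=> s; apply: Hconv].
move=> s; rewrite Haff //; field.
by rewrite !gt_eqF ?subr_gt0 // mulr_gt0.
Qed.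

Lemma B0_affine_rep phi : B0 Sig phi ->
  exists f c d, act f /\ 0 < c /\ forall s, phi s = c * u (f s) + d.
Proof.
move=> hphi; have [K [K0 hK]] := simple_bounded hphi.
have [f hf ephi] := B0_affine_u hphi K0 hK.
exists f, (2 * K / (u z1 - u z0)), (- K - 2 * K / (u z1 - u z0) * u z0); split => //.
by split => //; apply: divr_gt0; [apply: mulr_gt0 | rewrite subr_gt0].
Qed.

End Utility.
End Acts.

Lemma nonconstant_lt (V : lmodType Real) (X : V -> Prop) (u : V -> Real) :
  nonconstant_on X u -> exists x0 x1, X x0 /\ X x1 /\ u x0 < u x1.
Proof.
move=> [x [y [hx [hy ne]]]].
by case: (ltgtP (u x) (u y)) => lt //; [exists x, y | exists y, x].
Qed.

Section AffineUniqueness.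
Variables (V : lmodType Real) (C : V -> Prop) (v v' : V -> Real).
Hypothesis Cconv : convex_set C.
Hypotheses (vaff : affine_on C v) (v'aff : affine_on C v').
Hypothesis same_order : forall x y, C x -> C y -> (v x < v y <-> v' x < v' y).

Lemma same_order_eq x y : C x -> C y -> v x = v y -> v' x = v' y.
Proof.
move=> hx hy e; case: (ltgtP (v' x) (v' y)) => // h.
  by move/(same_order hx hy): h; rewrite e ltxx.
by move/(same_order hy hx): h; rewrite e ltxx.
Qed.

(* One of x0, x1, z has the same v-value as a mixture of the other two; same_order_eq
   transfers this equation to v'. *)
Lemma affine_same_order x0 x1 z : C x0 -> C x1 -> v x0 < v x1 -> C z ->
  v' z = v' x0 + (v z - v x0) * (v' x1 - v' x0) / (v x1 - v x0).
Proof.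
move=> hx0 hx1 h01 hz; have D0 : v x1 - v x0 != 0 by rewrite subr_eq0 gt_eqF.
have [hz0 | hz0] := lerP (v x0) (v z); first have [hz1 | hz1] := lerP (v z) (v x1).
- have ht : 0 <= (v z - v x0) / (v x1 - v x0) <= 1 by apply: divr_in01; lra.
  have e : v (((v z - v x0) / (v x1 - v x0)) *: x1 + (1 - (v z - v x0) / (v x1 - v x0)) *: x0)
      = v z by rewrite vaff //; field.
  by rewrite -(same_order_eq (Cconv hx1 hx0 ht) hz e) v'aff //; field.
- have ht : 0 <= (v x1 - v x0) / (v z - v x0) <= 1 by apply: divr_in01; lra.
  have E0 : v z - v x0 != 0 by rewrite gt_eqF // subr_gt0 (lt_trans h01 hz1).
  have e : v (((v x1 - v x0) / (v z - v x0)) *: z + (1 - (v x1 - v x0) / (v z - v x0)) *: x0)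
      = v x1 by rewrite vaff //; field.
  have := same_order_eq (Cconv hz hx0 ht) hx1 e; rewrite v'aff // => <-.
  by field; rewrite D0 E0.
- have ht : 0 <= (v x1 - v x0) / (v x1 - v z) <= 1 by apply: divr_in01; lra.
  have F0 : v x1 - v z != 0 by rewrite gt_eqF // subr_gt0 (lt_trans hz0 h01).
  have e : v (((v x1 - v x0) / (v x1 - v z)) *: z + (1 - (v x1 - v x0) / (v x1 - v z)) *: x1)
      = v x0 by rewrite vaff //; field.
  have := same_order_eq (Cconv hz hx1 ht) hx0 e; rewrite v'aff // => <-.
  by field; rewrite D0 F0.
Qed.

End AffineUniqueness.

Definition converse (A : Type) (R : A -> A -> Prop) : A -> A -> Prop := fun f g => R g f.

Definition conjugate (S : Type) (I : (S -> Real) -> Real) (phi : S -> Real) : Real :=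
  - I (fun s => - phi s).

Section Duality.
Variables (S : Type) (Sig : (S -> Prop) -> Prop) (V : lmodType Real) (X : V -> Prop)
  (P : (S -> V) -> (S -> V) -> Prop).

Lemma A1_converse : A1 Sig X P -> A1 Sig X (converse P).
Proof.
move=> [asym [trans [[x [y [hx [hy hxy]]]] neg]]]; split.
  by move=> f g hf hg; apply: asym.
split; first by move=> f g h hf hg hh h1 h2; apply: (trans h g f).
split; first by exists y, x.
by move=> x' y' z hx' hy' hz /(neg _ _ _ hy' hx' hz) [] ?; [right | left].
Qed.

Lemma A2_converse : A2 Sig X P -> A2 Sig X (converse P).
Proof. by move=> HA2 act f g h hf hg hh; have [? ?] := HA2 f g h hf hg hh. Qed.

Lemma A3_converse : A3 Sig X P -> A3 Sig X (converse P).
Proof. by move=> HA3 act f g x a hf hg hx ha; apply: HA3. Qed.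

Lemma A5_converse : A5 Sig X P -> A5 Sig X (converse P).
Proof. by move=> HA5 act f g hf hg hs; apply: HA5. Qed.

End Duality.

Section CertaintyEquivalent.
Variables (S : Type) (V : lmodType Real) (X : V -> Prop) (P : (S -> V) -> (S -> V) -> Prop)
  (u : V -> Real).

Definition lower_ce (f : S -> V) (t : Real) :=
  u_range X u t /\ forall x, X x -> (P f (cst S x) <-> u x < t).

Definition upper_ce (f : S -> V) (t : Real) :=
  u_range X u t /\ forall x, X x -> (P (cst S x) f <-> t < u x).

Lemma lower_ce_unique f t t' : lower_ce f t -> lower_ce f t' -> t = t'.
Proof.
have lt_false t1 t2 : lower_ce f t1 -> lower_ce f t2 -> ~ t1 < t2.
  move=> [[x hx ex] ce] [_ ce'] lt12; have : u x < t2 by rewrite ex.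
  by move/(ce' x hx)/(ce x hx); rewrite ex ltxx.
move=> h h'; apply/eqP; rewrite eq_le !leNgt.
by apply/andP; split; apply/negP; [apply: lt_false h' h | apply: lt_false h h'].
Qed.

Lemma upper_ce_unique f t t' : upper_ce f t -> upper_ce f t' -> t = t'.
Proof.
have lt_false t1 t2 : upper_ce f t1 -> upper_ce f t2 -> ~ t1 < t2.
  move=> [_ ce] [[x hx ex] ce'] lt12; have : t1 < u x by rewrite ex.
  by move/(ce x hx)/(ce' x hx); rewrite ex ltxx.
move=> h h'; apply/eqP; rewrite eq_le !leNgt.
by apply/andP; split; apply/negP; [apply: lt_false h' h | apply: lt_false h h'].
Qed.

End CertaintyEquivalent.

Lemma affine_onN (V : lmodType Real) (X : V -> Prop) (u : V -> Real) :
  affine_on X u -> affine_on X (fun x => - u x).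
Proof. by move=> Haff x y a hx hy ha; rewrite Haff //; ring. Qed.

Lemma lower_ce_converse (S : Type) (V : lmodType Real) (X : V -> Prop)
  (P : (S -> V) -> (S -> V) -> Prop) (u : V -> Real) f t :
  lower_ce X (converse P) (fun x => - u x) f t -> upper_ce X P u f (- t).
Proof.
move=> [[x hx ex] ce]; split; first by exists x => //; rewrite -ex opprK.
by move=> y hy; rewrite ltrNl; apply: ce.
Qed.

Section Conjugate.
Variables (S : Type) (Sig : (S -> Prop) -> Prop) (I : (S -> Real) -> Real).
Hypothesis HSig : is_algebra Sig.

Lemma B0_opp phi : B0 Sig phi -> B0 Sig (fun s => - phi s).
Proof. exact: (simple_comp HSig (fun v => - v)). Qed.

Lemma conjugate_const_linear : const_linear Sig I -> const_linear Sig (conjugate I).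
Proof.
move=> hI phi a b hphi a0; rewrite /conjugate.
have -> : (fun s => - (a * phi s + b)) = (fun s => a * (- phi s) + - b).
  by apply: functional_extensionality => s; ring.
by rewrite hI //; [ring | apply: B0_opp].
Qed.

Lemma conjugate_monotonic : monotonic Sig I -> monotonic Sig (conjugate I).
Proof.
move=> hI phi psi hphi hpsi hle; rewrite /conjugate lerN2.
by apply: hI; [apply: B0_opp | apply: B0_opp | move=> s; rewrite lerN2; apply: hle].
Qed.

End Conjugate.

(** * Expected utility on constant acts *)

Lemma exists_top (T : eqType) (X : T -> Prop) (R : T -> T -> Prop) :
  (forall x, X x -> ~ R x x) ->
  (forall x y z, X x -> X y -> X z -> R x y -> R y z -> R x z) ->
  forall x (s : seq T), X x -> (forall y, y \in s -> X y) ->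
  exists2 B, X B & forall y, y \in x :: s -> ~ R y B.
Proof.
move=> irr trans x s hx; elim: s => [_ | y s IH hs].
  by exists x => // y; rewrite mem_seq1 => /eqP ->; apply: irr.
have hy : X y by apply: hs; rewrite mem_head.
have hsX z : z \in s -> X z by move=> hz; apply: hs; rewrite in_cons hz orbT.
have [B hB top] := IH hsX.
have Xs z : z \in x :: s -> X z by rewrite in_cons => /orP [/eqP -> // | /hsX].
have [yB | nyB] := classic (R y B).
  exists y => // z; rewrite !in_cons orbCA -in_cons => /orP [/eqP -> | hz]; first exact: irr.
  by move=> zy; apply: (top z hz); apply: trans (Xs z hz) hy hB zy yB.
by exists B => // z; rewrite !in_cons orbCA -in_cons => /orP [/eqP -> | /top].
Qed.

Section VonNeumannMorgenstern.
Variables (V : lmodType Real) (X : V -> Prop) (R : V -> V -> Prop).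
Hypothesis Hconv : convex_set X.
Hypothesis Rasym : forall x y, X x -> X y -> R x y -> ~ R y x.
Hypothesis Rtrans : forall x y z, X x -> X y -> X z -> R x y -> R y z -> R x z.
Hypothesis Rneg : forall x y z, X x -> X y -> X z -> R x y -> R x z \/ R z y.
Hypothesis Rcont1 : forall x y z, X x -> X y -> X z ->
  open_in_unit (fun a => R (a *: x + (1 - a) *: y) z).
Hypothesis Rcont2 : forall x y z, X x -> X y -> X z ->
  open_in_unit (fun a => R z (a *: x + (1 - a) *: y)).
Hypothesis Rind : forall x y z (a : Real), X x -> X y -> X z -> 0 < a < 1 ->
  (R x y <-> R (a *: x + (1 - a) *: z) (a *: y + (1 - a) *: z)).

Lemma R_irrefl x : X x -> ~ R x x.
Proof. by move=> hx h; apply: (Rasym hx hx h h). Qed.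

Lemma notR_trans x y z : X x -> X y -> X z -> ~ R x y -> ~ R y z -> ~ R x z.
Proof. by move=> hx hy hz h1 h2 /(Rneg hx hz hy) []. Qed.

Lemma incomp_refl x : X x -> incomp R x x.
Proof. by move=> hx; split; apply: R_irrefl. Qed.

Lemma incomp_sym x y : incomp R x y -> incomp R y x.
Proof. by case. Qed.

Lemma incomp_trans x y z : X x -> X y -> X z -> incomp R x y -> incomp R y z -> incomp R x z.
Proof.
move=> hx hy hz [h1 h2] [h3 h4]; split => h.
  by case: (Rneg hx hz hy h).
by case: (Rneg hz hx hy h).
Qed.

Lemma R_incomp_trans x y z : X x -> X y -> X z -> R x y -> incomp R y z -> R x z.
Proof. by move=> hx hy hz h [_ h2]; case: (Rneg hx hy hz h). Qed.

Lemma incomp_R_trans x y z : X x -> X y -> X z -> incomp R x y -> R y z -> R x z.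
Proof. by move=> hx hy hz [_ h2] h; case: (Rneg hy hz hx h). Qed.

Lemma R_mixl x y (c : Real) : X x -> X y -> 0 < c <= 1 -> R x y -> R (c *: x + (1 - c) *: y) y.
Proof.
move=> hx hy /andP [c0 c1] h; have [-> | ne1] := eqVneq c 1; first by rewrite mixv1.
have := Rind hx hy hy (a := c); rewrite mixvv => H; apply/H => //.
by rewrite c0 lt_neqAle ne1 c1.
Qed.

Lemma R_mixr x y (c : Real) : X x -> X y -> 0 <= c < 1 -> R x y -> R x (c *: x + (1 - c) *: y).
Proof.
move=> hx hy /andP [c0 c1] h; have [-> | ne0] := eqVneq c 0; first by rewrite mixv0.
have := Rind hx hy hx (a := 1 - c); rewrite mixvv => H; rewrite mixvC; apply/H => //.
have c0' : 0 < c by rewrite lt_neqAle eq_sym ne0 c0.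
by apply/andP; split; lra.
Qed.

Lemma incomp_mix y y' z (c : Real) : X y -> X y' -> X z -> 0 <= c <= 1 -> incomp R y y' ->
  incomp R (c *: y + (1 - c) *: z) (c *: y' + (1 - c) *: z).
Proof.
move=> hy hy' hz /andP [c0 c1] [h1 h2].
have [-> | ne0] := eqVneq c 0; first by rewrite !mixv0; apply: incomp_refl.
have [-> | ne1] := eqVneq c 1; first by rewrite !mixv1.
have hc : 0 < c < 1 by rewrite !lt_neqAle eq_sym ne0 ne1 c0 c1.
by split; rewrite -(Rind _ _ _ hc).
Qed.

Section Segment.
Variables (b w : V).
Hypotheses (hb : X b) (hw : X w) (hbw : R b w).

Definition seg (t : Real) : V := t *: b + (1 - t) *: w.

Lemma seg_X t : 0 <= t <= 1 -> X (seg t).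
Proof. by move=> ht; apply: Hconv. Qed.

Lemma seg1 : seg 1 = b. Proof. exact: mixv1. Qed.
Lemma seg0 : seg 0 = w. Proof. exact: mixv0. Qed.

Lemma seg_R s t : 0 <= s -> s < t -> t <= 1 -> R (seg t) (seg s).
Proof.
move=> s0 st t1.
have hs : X (seg s) by apply: seg_X; apply/andP; split; lra.
have hbs : R b (seg s) by apply: R_mixr => //; apply/andP; split; lra.
have hc : 0 < (t - s) / (1 - s) <= 1.
  by apply/andP; split; [apply: divr_gt0 | rewrite ler_pdivrMr]; lra.
have := R_mixl hb hs hc hbs.
suff -> : (t - s) / (1 - s) *: b + (1 - (t - s) / (1 - s)) *: seg s = seg t by [].
by rewrite -{1}(mixv1 b w) /seg mixv_mix; congr (_ *: _ + _ *: _); field; lra.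
Qed.

Lemma seg_notR s t : 0 <= s -> s <= t -> t <= 1 -> ~ R (seg s) (seg t).
Proof.
move=> s0 st t1; have hs : 0 <= s <= 1 by apply/andP; split; lra.
have ht : 0 <= t <= 1 by apply/andP; split; lra.
have [<- | ne] := eqVneq s t; first exact: R_irrefl (seg_X hs).
by apply: Rasym (seg_X ht) (seg_X hs) _; apply: seg_R => //; rewrite lt_neqAle ne st.
Qed.

Definition bracketed z := X z /\ ~ R z b /\ ~ R w z.

(* The level of z is the supremum of the t with z above seg t; continuity (A2) excludes
   strict preference either way at the supremum. *)
Lemma bracketed_seg_incomp z : bracketed z -> exists t, 0 <= t <= 1 /\ incomp R z (seg t).
Proof.
move=> [hz [hzb hwz]].
pose E t := (0 <= t <= 1 /\ R z (seg t)) \/ t = 0.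
have [|m [mub mlub]] := has_sup (M := 1) (ex_intro E 0 (or_intror erefl)).
  by move=> x [[/andP [_ h] _] | ->] //; lra.
have m0 : 0 <= m by apply: mub; right.
have m1 : m <= 1 by apply: mlub => x [[/andP [_ h] _] | ->] //; lra.
have hm : 0 <= m <= 1 by apply/andP.
exists m; split => //; split => h.
- have mlt : m < 1.
    by rewrite lt_neqAle m1 andbT; apply/eqP => e; apply: hzb; rewrite -seg1 -e.
  have [e [e0 he]] := Rcont2 hb hw hz hm h.
  have [t [mt [t1 te]]] := point_above_close mlt e0.
  suff : t <= m by lra.
  apply: mub; left; split; first by apply/andP; split; lra.
  by apply: he; [apply/andP; split; lra | apply: ltr_norml_of; lra].
- have mgt : 0 < m.
    by rewrite lt_neqAle m0 andbT eq_sym; apply/eqP => e; apply: hwz; rewrite -seg0 -e.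
  have [e [e0 he]] := Rcont1 hb hw hz hm h.
  have [t [t0 [tm te]]] := point_below_close mgt e0.
  have ht : R (seg t) z by apply: he; [apply/andP; split; lra | apply: ltr_norml_of; lra].
  have : ~ (forall x, E x -> x <= t) by move=> hh; have := mlub _ hh; lra.
  move=> /not_all_ex_not [t' Ht']; have [ht' nt'] := imply_to_and _ _ Ht'.
  have tt' : t < t' by rewrite ltNge; apply/negP.
  case: ht' => [[/andP [_ t'1] hzt'] | e']; last by lra.
  have hst : X (seg t) by apply: seg_X; apply/andP; split; lra.
  have hst' : X (seg t') by apply: seg_X; apply/andP; split; lra.
  by apply: (Rasym hst hst' (Rtrans hst hz hst' ht hzt')); apply: seg_R => //; lra.
Qed.

Lemma seg_incomp_unique z s t : X z -> 0 <= s <= 1 -> 0 <= t <= 1 ->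
  incomp R z (seg s) -> incomp R z (seg t) -> s = t.
Proof.
move=> hz /andP [s0 s1] /andP [t0 t1] h1 h2.
have hs : X (seg s) by apply: seg_X; apply/andP.
have ht : X (seg t) by apply: seg_X; apply/andP.
have [n1 n2] := incomp_trans hs hz ht (incomp_sym h1) h2.
by case: (ltgtP s t) => // st; [case: n2 | case: n1]; apply: seg_R.
Qed.

Lemma seg_bracketed t : 0 <= t <= 1 -> bracketed (seg t).
Proof.
move=> /andP [t0 t1]; split; first by apply: seg_X; apply/andP.
by split; [rewrite -seg1 | rewrite -seg0]; apply: seg_notR.
Qed.

Lemma incomp_seg_bracketed z t : X z -> 0 <= t <= 1 -> incomp R z (seg t) -> bracketed z.
Proof.
move=> hz ht [h1 h2]; have [hs [hsb hws]] := seg_bracketed ht.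
by split => //; split; [exact: notR_trans hz hs hb h1 hsb | exact: notR_trans hw hs hz hws h2].
Qed.

Definition level z := epsilon (inhabits 0) (fun t => 0 <= t <= 1 /\ incomp R z (seg t)).

Lemma levelP z : bracketed z -> 0 <= level z <= 1 /\ incomp R z (seg (level z)).
Proof.
move=> h; apply: (epsilon_spec _ (fun t => 0 <= t <= 1 /\ incomp R z (seg t))).
exact: bracketed_seg_incomp.
Qed.

Lemma level_eq z t : X z -> 0 <= t <= 1 -> incomp R z (seg t) -> level z = t.
Proof.
move=> hz ht h; have [h1 h2] := levelP (incomp_seg_bracketed hz ht h).
exact: seg_incomp_unique hz h1 ht h2 h.
Qed.

Lemma level_mix y z (c : Real) : bracketed y -> bracketed z -> 0 <= c <= 1 ->
  bracketed (c *: y + (1 - c) *: z) /\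
  level (c *: y + (1 - c) *: z) = c * level y + (1 - c) * level z.
Proof.
move=> hy hz hc.
have [hty Iy] := levelP hy; have [htz Iz] := levelP hz.
have Xy := hy.1; have Xz := hz.1; have Xpy := seg_X hty; have Xpz := seg_X htz.
have hc' : 0 <= 1 - c <= 1 by case/andP: hc => ? ?; apply/andP; split; lra.
have I1 := incomp_mix Xy Xpy Xz hc Iy.
have := incomp_mix Xz Xpz Xpy hc' Iz; rewrite -!mixvC => I2.
have I3 := incomp_trans (Hconv Xy Xz hc) (Hconv Xpy Xz hc) (Hconv Xpy Xpz hc) I1 I2.
rewrite /seg mixv_mix -/(seg _) in I3.
have ht : 0 <= c * level y + (1 - c) * level z <= 1.
  by case/andP: hc => ? ?; case/andP: hty => ? ?; case/andP: htz => ? ?; apply/andP; split; nra.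
split; first exact: incomp_seg_bracketed (Hconv Xy Xz hc) ht I3.
exact: level_eq (Hconv Xy Xz hc) ht I3.
Qed.

Lemma level_R y z : bracketed y -> bracketed z -> (R y z <-> level z < level y).
Proof.
move=> hy hz.
have [hty Iy] := levelP hy; have [htz Iz] := levelP hz.
have Xy := hy.1; have Xz := hz.1; have Xpy := seg_X hty; have Xpz := seg_X htz.
have dir : forall y z, bracketed y -> bracketed z -> level z < level y -> R y z.
  move=> y' z' hy' hz' lt.
  have [hy01 Iy'] := levelP hy'; have [hz01 Iz'] := levelP hz'.
  have [/andP [_ y1] /andP [z0 _]] := (hy01, hz01).
  apply: (R_incomp_trans hy'.1 (seg_X hz01) hz'.1 _ (incomp_sym Iz')).
  exact: incomp_R_trans hy'.1 (seg_X hy01) (seg_X hz01) Iy' (seg_R z0 lt y1).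
split => [h | ]; last exact: dir.
case: (ltgtP (level z) (level y)) => // le; first by case: (Rasym Xy Xz h); apply: dir.
case: (incomp_trans Xy Xpy Xz Iy _) => //.
by rewrite -le; apply: incomp_sym.
Qed.

End Segment.

Section Normalization.
Variables (x0 x1 : V).
Hypotheses (Hx0 : X x0) (Hx1 : X x1) (H10 : R x1 x0).

Definition wide b w := X b /\ X w /\ ~ R x1 b /\ ~ R w x0.

Lemma wide_bracket b w : wide b w -> R b w /\ bracketed b w x0 /\ bracketed b w x1.
Proof.
move=> [hb [hw [h1 h2]]].
have hbx0 : R b x0 by case: (Rneg Hx1 Hx0 hb H10).
have hbw : R b w by case: (Rneg hb Hx0 hw hbx0).
split => //; split; split => //; split => //.
- by move=> /(Rneg Hx0 hb Hx1) [] //; exact: Rasym Hx1 Hx0 H10.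
- by move=> /(Rneg hw Hx1 Hx0) [] //; exact: Rasym Hx1 Hx0 H10.
Qed.

Lemma level_x0_lt_x1 b w : wide b w -> level b w x0 < level b w x1.
Proof.
move=> bw; have [hb [hw _]] := bw; have [hbw [i0 i1]] := wide_bracket bw.
exact/(level_R hb hw hbw i1 i0).
Qed.

Definition nlevel b w z := (level b w z - level b w x0) / (level b w x1 - level b w x0).

Lemma bracketed_widen b w b' w' z : X b -> X w -> X b' -> X w' -> ~ R b b' -> ~ R w' w ->
  bracketed b w z -> bracketed b' w' z.
Proof.
move=> hb hw hb' hw' h1 h2 [hz [hzb hwz]].
by split => //; split; [exact: notR_trans hz hb hb' hzb h1 | exact: notR_trans hw' hw hz h2 hwz].
Qed.

(* Levels in two nested brackets induce the same order, so they agree up to affine rescaling. *)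
Lemma nlevel_widen b w b' w' z : wide b w -> X b' -> X w' -> ~ R b b' -> ~ R w' w ->
  bracketed b w z -> nlevel b w z = nlevel b' w' z.
Proof.
move=> bw hb' hw' h1 h2 hz; have [hb [hw [b1 w0]]] := bw.
have bw' : wide b' w'.
  by do !split => //; [exact: notR_trans Hx1 hb hb' b1 h1 | exact: notR_trans hw' hw Hx0 h2 w0].
have [hbw [i0 i1]] := wide_bracket bw; have [hbw' _] := wide_bracket bw'.
have widen := bracketed_widen hb hw hb' hw' h1 h2.
have same : forall x y, bracketed b w x -> bracketed b w y ->
    (level b w x < level b w y <-> level b' w' x < level b' w' y).
  by move=> x y hx hy; rewrite -(level_R hb hw hbw hy hx) (level_R hb' hw' hbw' (widen _ hy) (widen _ hx)).
have key := affine_same_order (C := bracketed b w) (v := level b w) (v' := level b' w')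
  (fun x y a hx hy ha => (level_mix hb hw hbw hx hy ha).1)
  (fun x y a hx hy ha => (level_mix hb hw hbw hx hy ha).2)
  (fun x y a hx hy ha => (level_mix hb' hw' hbw' (widen _ hx) (widen _ hy) ha).2)
  same i0 i1 (level_x0_lt_x1 bw) hz.
rewrite /nlevel key; field.
by rewrite !subr_eq0 !gt_eqF // level_x0_lt_x1.
Qed.

Lemma common_bracket (s : seq V) : (forall y, y \in s -> X y) ->
  exists b w, wide b w /\ forall y, y \in s -> bracketed b w y.
Proof.
move=> hs.
have [b hb top] := exists_top R_irrefl Rtrans Hx1 hs.
have [w hw bot] := exists_top (R := converse R) R_irrefl
  (fun x y z hx hy hz h1 h2 => Rtrans hz hy hx h2 h1) Hx0 hs.
exists b, w; split; first by do !split => //; [apply: top | apply: bot]; rewrite mem_head.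
by move=> y hy; split; [apply: hs | split; [apply: top | apply: bot]; rewrite in_cons hy orbT].
Qed.

Definition vnm_bracket z : V * V :=
  epsilon (inhabits (x1, x0)) (fun p => wide p.1 p.2 /\ bracketed p.1 p.2 z).

Definition vnm_u z := nlevel (vnm_bracket z).1 (vnm_bracket z).2 z.

Lemma vnm_uE b w z : wide b w -> bracketed b w z -> vnm_u z = nlevel b w z.
Proof.
move=> bw hz; have [bw' hz'] : wide (vnm_bracket z).1 (vnm_bracket z).2 /\
    bracketed (vnm_bracket z).1 (vnm_bracket z).2 z.
  by apply: (epsilon_spec _ (fun p => wide p.1 p.2 /\ bracketed p.1 p.2 z)); exists (b, w).
rewrite /vnm_u; move: (vnm_bracket z) bw' hz' => p bw' hz'.
have [hb [hw _]] := bw; have [hb' [hw' _]] := bw'.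
have [|B [W [BW hBW]]] := common_bracket (s := [:: b; w; p.1; p.2]).
  by move=> y; rewrite !inE => /or4P [] /eqP ->.
have [hB [hW _]] := BW.
have [_ [bB _]] : bracketed B W b by apply: hBW; rewrite !inE eqxx.
have [_ [_ Ww]] : bracketed B W w by apply: hBW; rewrite !inE eqxx orbT.
have [_ [pB _]] : bracketed B W p.1 by apply: hBW; rewrite !inE eqxx !orbT.
have [_ [_ Wp]] : bracketed B W p.2 by apply: hBW; rewrite !inE eqxx !orbT.
by rewrite (nlevel_widen bw' hB hW pB Wp hz') (nlevel_widen bw hB hW bB Ww hz).
Qed.

Lemma vnm_u_affine : affine_on X vnm_u.
Proof.
move=> y z c hy hz hc.
have [|b [w [bw hbw]]] := common_bracket (s := [:: y; z]).
  by move=> x; rewrite !inE => /orP [] /eqP ->.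
have [hbw' _] := wide_bracket bw; have [hb [hw _]] := bw.
have Iy : bracketed b w y by apply: hbw; rewrite mem_head.
have Iz : bracketed b w z by apply: hbw; rewrite !inE eqxx orbT.
have [Im em] := level_mix hb hw hbw' Iy Iz hc.
rewrite (vnm_uE bw Iy) (vnm_uE bw Iz) (vnm_uE bw Im) /nlevel em.
by field; rewrite subr_eq0 gt_eqF // level_x0_lt_x1.
Qed.

Lemma vnm_u_R y z : X y -> X z -> (R y z <-> vnm_u z < vnm_u y).
Proof.
move=> hy hz.
have [|b [w [bw hbw]]] := common_bracket (s := [:: y; z]).
  by move=> x; rewrite !inE => /orP [] /eqP ->.
have [hbw' _] := wide_bracket bw; have [hb [hw _]] := bw.
have Iy : bracketed b w y by apply: hbw; rewrite mem_head.
have Iz : bracketed b w z by apply: hbw; rewrite !inE eqxx orbT.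
rewrite (vnm_uE bw Iy) (vnm_uE bw Iz) (level_R hb hw hbw' Iy Iz) /nlevel.
by rewrite ltr_pM2r ?invr_gt0 ?subr_gt0 ?level_x0_lt_x1 // ltrD2r.
Qed.

End Normalization.

Theorem vnm_utility : (exists x0 x1, X x0 /\ X x1 /\ R x1 x0) ->
  exists u, affine_on X u /\ forall y z, X y -> X z -> (R y z <-> u z < u y).
Proof.
by move=> [x0 [x1 [hx0 [hx1 h10]]]]; exists (vnm_u x0 x1); split;
  [apply: vnm_u_affine | apply: vnm_u_R].
Qed.

End VonNeumannMorgenstern.

(** * Lower certainty equivalents *)

Section LowerCertaintyEquivalent.
Variables (S : Type) (Sig : (S -> Prop) -> Prop) (V : lmodType Real) (X : V -> Prop)
  (P : (S -> V) -> (S -> V) -> Prop) (u : V -> Real) (s0 : S) (z0 z1 : V).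
Hypotheses (HSig : is_algebra Sig) (Hconv : convex_set X).
Hypotheses (HA1 : A1 Sig X P) (HA2 : A2 Sig X P) (HA3 : A3 Sig X P) (HA5 : A5 Sig X P).
Hypothesis Haff : affine_on X u.
Hypothesis Hcst : forall x y, X x -> X y -> (P (cst S x) (cst S y) <-> u y < u x).
Hypotheses (Hz0 : X z0) (Hz1 : X z1) (Hz01 : u z0 < u z1).
Local Notation act := (is_act Sig X).
Local Notation cact := (act_cst HSig).

Lemma P_asym f g : act f -> act g -> P f g -> ~ P g f.
Proof. by case: HA1 => asym _; apply: asym. Qed.

Lemma P_trans f g h : act f -> act g -> act h -> P f g -> P g h -> P f h.
Proof. by case: HA1 => _ [trans _]; apply: trans. Qed.

Lemma act_mix_cst f x (a : Real) : act f -> X x -> 0 <= a <= 1 -> act (mix a f (cst S x)).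
Proof. by move=> hf hx; apply: act_mix => //; apply: cact. Qed.

Lemma X_half v w : X v -> X w -> X (1 / 2 *: v + (1 - 1 / 2) *: w).
Proof. by move=> hv hw; apply: Hconv => //; apply: half_in01W. Qed.

Lemma pref_of_u_lt f x : act f -> X x -> (forall s, u x < u (f s)) -> P f (cst S x).
Proof. by move=> hf hx h; apply: (HA5 hf (cact hx)) => s; apply/Hcst => //; case: hf. Qed.

Lemma pref_of_u_gt f x : act f -> X x -> (forall s, u (f s) < u x) -> P (cst S x) f.
Proof. by move=> hf hx h; apply: (HA5 (cact hx) hf) => s; apply/Hcst => //; case: hf. Qed.

Lemma pref_cst_lt f x y : act f -> X x -> X y -> P f (cst S x) -> u y < u x -> P f (cst S y).
Proof. by move=> hf hx hy h /(Hcst hx hy); apply: P_trans hf (cact hx) (cact hy) h. Qed.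

Lemma pref_cst_open f x z : act f -> X x -> X z -> u x < u z -> P f (cst S x) ->
  exists2 x', X x' & u x < u x' /\ P f (cst S x').
Proof.
move=> hf hx hz xz h.
have h1 : P f (mix 1 (cst S x) (cst S z)) by rewrite mix1f.
have [|e [e0 he]] := (HA2 (cact hx) (cact hz) hf).2 1 _ h1; first by rewrite ler01 lexx.
have [t [t0 [t1 te]]] := point_below_close ltr01 e0.
have ht : 0 <= t <= 1 by apply/andP; split; lra.
exists (t *: x + (1 - t) *: z); first exact: Hconv.
split; first by rewrite Haff //; nra.
by apply: he => //; apply: ltr_norml_of; lra.
Qed.

(* When nothing lies above x, A3 lets us move halfway towards z0 first. *)
Lemma pref_cst_eq f x y : act f -> X x -> X y -> u x = u y -> P f (cst S x) -> P f (cst S y).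
Proof.
have room f' x' y' : act f' -> X x' -> X y' -> u x' = u y' ->
    (exists2 z, X z & u x' < u z) -> P f' (cst S x') -> P f' (cst S y').
  move=> hf hx hy e [z hz xz] /(pref_cst_open hf hx hz xz) [w hw [lt h]].
  by apply: pref_cst_lt hf hw hy h _; rewrite -e.
move=> hf hx hy e h.
have [top | notop] := classic (exists2 z, X z & u x < u z); first exact: room _ _ _ hf hx hy e top h.
have z0x : u z0 < u x.
  by rewrite ltNge; apply/negP => xz0; apply: notop; exists z1 => //; apply: le_lt_trans xz0 Hz01.
apply/(HA3 hf (cact hy) Hz0 half_in01).
apply: (room _ _ _ (act_mix_cst hf Hz0 half_in01W) (X_half hx Hz0) (X_half hy Hz0)).
- by rewrite !Haff ?e //; apply: half_in01W.
- by exists x => //; rewrite Haff //; [lra | apply: half_in01W].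
- exact/(HA3 hf (cact hx) Hz0 half_in01).
Qed.

Lemma pref_cst_le f x y : act f -> X x -> X y -> P f (cst S x) -> u y <= u x -> P f (cst S y).
Proof.
move=> hf hx hy h; rewrite le_eqVlt => /orP [/eqP e | lt]; last exact: pref_cst_lt h lt.
exact: pref_cst_eq hf hx hy (esym e) h.
Qed.

Lemma not_pref_cst_of_le f b : act f -> X b -> (forall s, u (f s) <= u b) -> ~ P f (cst S b).
Proof.
have room f' b' : act f' -> X b' -> (forall s, u (f' s) <= u b') ->
    (exists2 z, X z & u b' < u z) -> ~ P f' (cst S b').
  move=> hf hb fb [z hz bz] /(pref_cst_open hf hb hz bz) [x hx [bx h]].
  by apply: (P_asym hf (cact hx) h); apply: pref_of_u_gt => // s; apply: le_lt_trans (fb s) bx.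
move=> hf hb fb h.
have [top | notop] := classic (exists2 z, X z & u b < u z); first exact: room _ _ hf hb fb top h.
have z0b : u z0 < u b.
  by rewrite ltNge; apply/negP => bz0; apply: notop; exists z1 => //; apply: le_lt_trans bz0 Hz01.
apply: (room _ _ (act_mix_cst hf Hz0 half_in01W) (X_half hb Hz0)).
- move=> s; rewrite (u_mix_cst Haff hf Hz0 half_in01W) (Haff hb Hz0 half_in01W).
  by have := fb s; lra.
- by exists b => //; rewrite Haff //; [lra | apply: half_in01W].
- exact/(HA3 hf (cact hb) Hz0 half_in01).
Qed.

(* The lower certainty equivalent is the supremum of the utilities of constants below f. *)
Lemma lower_ce_exists f : act f -> exists t, lower_ce X P u f t.
Proof.
move=> hf; have [hfs hfX] := hf.
have [sw hsw] := simple_argmin u s0 hfs; have [sb hsb] := simple_argmax u s0 hfs.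
have hw := hfX sw; have hb := hfX sb.
have nb : ~ P f (cst S (f sb)) by apply: not_pref_cst_of_le.
pose E t := t = u (f sw) \/ exists2 x, X x & P f (cst S x) /\ t = u x.
have Eub t : E t -> t <= u (f sb).
  case=> [-> | [x hx [h ->]]]; first exact: hsb.
  by rewrite leNgt; apply/negP => lt; apply: nb; apply: pref_cst_lt hf hx hb h lt.
have [m [mub mlub]] := has_sup (ex_intro E (u (f sw)) (or_introl erefl)) Eub.
have mw : u (f sw) <= m by apply: mub; left.
have mb : m <= u (f sb) by apply: mlub.
exists m; split.
  by apply: (u_range_between Hconv Haff (a := u (f sw)) (b := u (f sb)));
    [exists (f sw) | exists (f sb) | apply/andP].
move=> x hx; split => [h | lt].
  have xm : u x <= m by apply: mub; right; exists x.
  rewrite lt_neqAle xm andbT; apply/eqP => e.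
  have [xb | bx] := ltP (u x) (u (f sb)); last exact: nb (pref_cst_le hf hx hb h bx).
  have [x' hx' [lt h']] := pref_cst_open hf hx hb xb h.
  have : u x' <= m by apply: mub; right; exists x'.
  by rewrite -e leNgt lt.
have : ~ (forall e, E e -> e <= u x) by move=> hh; have := mlub _ hh; rewrite leNgt lt.
move=> /not_all_ex_not [e He]; have [he ne] := imply_to_and _ _ He.
have xe : u x < e by rewrite ltNge; apply/negP.
case: he => [ee | [x' hx' [h' ee]]]; subst e; last exact: pref_cst_lt hf hx' hx h' xe.
by apply: pref_of_u_lt => // s; apply: lt_le_trans xe (hsw s).
Qed.

Definition lce f := epsilon (inhabits 0) (lower_ce X P u f).

Lemma lceP f : act f -> lower_ce X P u f (lce f).
Proof. by move=> hf; apply: epsilon_spec; apply: lower_ce_exists. Qed.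

Lemma lce_eq f t : act f -> lower_ce X P u f t -> lce f = t.
Proof. by move=> hf; apply: lower_ce_unique (lceP hf). Qed.

Lemma lce_cst x : X x -> lce (cst S x) = u x.
Proof. by move=> hx; apply: lce_eq (cact hx) _; split; [exists x | move=> y hy; apply: Hcst]. Qed.

(* When nothing lies below g, A3 lets us move halfway towards z1 first. *)
Lemma pref_cst_mono f g x : act f -> act g -> X x -> (forall s, u (f s) <= u (g s)) ->
  P f (cst S x) -> P g (cst S x).
Proof.
have room f' g' x' : act f' -> act g' -> X x' -> (forall s, u (f' s) <= u (g' s)) ->
    (exists2 w, X w & forall s, u w < u (g' s)) -> P f' (cst S x') -> P g' (cst S x').
  move=> hf hg hx fg [w hw wg] h.
  have h1 : P (mix 1 f' (cst S w)) (cst S x') by rewrite mix1f.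
  have [|e [e0 he]] := (HA2 hf (cact hw) (cact hx)).1 1 _ h1; first by rewrite ler01 lexx.
  have [t [t0 [t1 te]]] := point_below_close ltr01 e0.
  have ht : 0 <= t <= 1 by apply/andP; split; lra.
  have hft := act_mix_cst hf hw ht.
  have hP : P (mix t f' (cst S w)) (cst S x') by apply: he => //; apply: ltr_norml_of; lra.
  apply: (P_trans hg hft (cact hx) _ hP); apply: (HA5 hg hft) => s.
  apply/Hcst; [by case: hg | by case: hft | ].
  by rewrite (u_mix_cst Haff hf hw ht); have := fg s; have := wg s; nra.
move=> hf hg hx fg h; have [hgs hgX] := hg.
have [sw hsw] := simple_argmin u s0 hgs.
have [[w hw wg] | nobelow] := classic (exists2 w, X w & u w < u (g sw)).
  by apply: (room _ _ _ hf hg hx fg _ h); exists w => // s; apply: lt_le_trans wg (hsw s).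
have gz1 : u (g sw) < u z1.
  by rewrite ltNge; apply/negP => z1g; apply: nobelow; exists z0 => //; apply: lt_le_trans Hz01 z1g.
apply/(HA3 hg (cact hx) Hz1 half_in01).
apply: (room _ _ _ (act_mix_cst hf Hz1 half_in01W) (act_mix_cst hg Hz1 half_in01W) (X_half hx Hz1)).
- move=> s; rewrite (u_mix_cst Haff hf Hz1 half_in01W) (u_mix_cst Haff hg Hz1 half_in01W).
  by have := fg s; lra.
- exists (g sw) => // s; rewrite (u_mix_cst Haff hg Hz1 half_in01W).
  by have := hsw s; lra.
- exact/(HA3 hf (cact hx) Hz1 half_in01).
Qed.

Lemma lce_mono f g : act f -> act g -> (forall s, u (f s) <= u (g s)) -> lce f <= lce g.
Proof.
move=> hf hg fg; rewrite leNgt; apply/negP => lt.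
have [[x hx ex] cg] := lceP hg; have [_ cf] := lceP hf.
have : P g (cst S x) by apply: (pref_cst_mono hf hg hx fg); apply/(cf x hx); rewrite ex.
by move/(cg x hx); rewrite ex ltxx.
Qed.

Lemma eq_lce f g : act f -> act g -> (forall s, u (f s) = u (g s)) -> lce f = lce g.
Proof. by move=> hf hg fg; apply/eqP; rewrite eq_le !lce_mono // => s; rewrite fg. Qed.

Lemma lce_mix_cst f z (c : Real) : act f -> X z -> 0 < c < 1 ->
  lce (mix c f (cst S z)) = c * lce f + (1 - c) * u z.
Proof.
move=> hf hz hc; have [c0 c1] := andP hc.
have hc' : 0 <= c <= 1 by apply/andP; split; lra.
have hf' := act_mix_cst hf hz hc'.
have [[xf hxf exf] cf] := lceP hf.
apply: lce_eq => //; split.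
  by exists (c *: xf + (1 - c) *: z); [apply: Hconv | rewrite Haff // exf].
move=> x hx; split => [h | lt].
  rewrite ltNge; apply/negP => ge.
  have hxm : X (c *: xf + (1 - c) *: z) by apply: Hconv.
  have : P (mix c f (cst S z)) (cst S (c *: xf + (1 - c) *: z)).
    by apply: (pref_cst_le hf' hx hxm h); rewrite Haff // exf.
  by move/(HA3 hf (cact hxf) hz hc) => /(cf xf hxf); rewrite exf ltxx.
have [[y0 hy0 y0f] | nobelow] := classic (exists2 y0, X y0 & u y0 < lce f).
  (* a constant y below f whose mixture with z still lies above x *)
  have [y hy [yf xy]] : exists2 y, X y & u y < lce f /\ u x <= c * u y + (1 - c) * u z.
    have [le0 | lt0] := lerP ((u x - (1 - c) * u z) / c) (u y0).
      by exists y0 => //; split => //; move: le0; rewrite ler_pdivrMr //; lra.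
    have ry0 : u_range X u (u y0) by exists y0.
    have rf : u_range X u (lce f) by exists xf.
    have [|y hy ey] := u_range_between Hconv Haff ry0 rf (t := (u x - (1 - c) * u z) / c).
      by rewrite (ltW lt0) ler_pdivrMr //; lra.
    exists y => //; rewrite ey; split; first by rewrite ltr_pdivrMr //; lra.
    by rewrite mulrC divfK ?gt_eqF //; lra.
  have : P (mix c f (cst S z)) (cst S (c *: y + (1 - c) *: z)).
    by apply/(HA3 hf (cact hy) hz hc); apply/(cf y hy).
  by move/(pref_cst_le hf' (Hconv hy hz hc') hx); apply; rewrite Haff.
apply: pref_of_u_lt => // s; rewrite (u_mix_cst Haff hf hz hc').
have : lce f <= u (f s) by rewrite leNgt; apply/negP => fs; apply: nobelow; exists (f s) => //; case: hf.
by nra.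
Qed.

(* 1/2 f + 1/2 g(s0) and 1/2 g + 1/2 f(s0) have the same utility profile. *)
Lemma lce_shift f g (d : Real) : act f -> act g -> (forall s, u (g s) = u (f s) + d) ->
  lce g = lce f + d.
Proof.
move=> hf hg fg; have hf0 : X (f s0) by case: hf.
have hg0 : X (g s0) by case: hg.
have hf' := act_mix_cst hf hg0 half_in01W; have hg' := act_mix_cst hg hf0 half_in01W.
have e : lce (mix (1 / 2) f (cst S (g s0))) = lce (mix (1 / 2) g (cst S (f s0))).
  apply: eq_lce hf' hg' _ => s.
  by rewrite (u_mix_cst Haff hf hg0 half_in01W) (u_mix_cst Haff hg hf0 half_in01W) !fg; lra.
move: e; rewrite !lce_mix_cst ?half_in01 //.
by have := fg s0; lra.
Qed.

Lemma lce_affine f g (a b : Real) : act f -> act g -> 0 < a ->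
  (forall s, u (g s) = a * u (f s) + b) -> lce g = a * lce f + b.
Proof.
have le1 f' g' a' b' : act f' -> act g' -> 0 < a' <= 1 ->
    (forall s, u (g' s) = a' * u (f' s) + b') -> lce g' = a' * lce f' + b'.
  move=> hf hg /andP [a0 a1] fg.
  have [ea | na] := eqVneq a' 1.
    by rewrite ea (lce_shift hf hg (d := b')) ?mul1r // => s; rewrite fg ea mul1r.
  have ha : 0 < a' < 1 by rewrite a0 lt_neqAle na a1.
  have ha' : 0 <= a' <= 1 by rewrite (ltW a0) a1.
  have hf0 : X (f' s0) by case: hf.
  rewrite (lce_shift (act_mix_cst hf hf0 ha') hg (d := b' - (1 - a') * u (f' s0))).
    by rewrite lce_mix_cst //; ring.
  by move=> s; rewrite (u_mix_cst Haff hf hf0 ha') fg; ring.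
move=> hf hg a0 fg; have [a1 | a1] := lerP a 1; first by apply: le1 => //; apply/andP.
have an : a != 0 by rewrite gt_eqF.
rewrite (le1 g f a^-1 (- b / a) hg hf); first by field.
  by rewrite invr_gt0 a0 invf_le1 // ltW.
by move=> s; rewrite fg; field.
Qed.

(* [a * lce f + b] for any representation [phi = a * u o f + b] with [a > 0]; this is
   well defined by lce_affine, and arbitrary when phi has no such representation. *)
Definition lce_B0 (phi : S -> Real) : Real := epsilon (inhabits 0) (fun t =>
  exists f a b, act f /\ 0 < a /\ (forall s, phi s = a * u (f s) + b) /\ t = a * lce f + b).

Lemma lce_B0E phi f a b : act f -> 0 < a -> (forall s, phi s = a * u (f s) + b) ->
  lce_B0 phi = a * lce f + b.
Proof.
move=> hf a0 ephi; rewrite /lce_B0.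
have [|f' [a' [b' [hf' [a'0 [ephi' ->]]]]]] := epsilon_spec (inhabits (0 : Real)) (fun t =>
  exists f a b, act f /\ 0 < a /\ (forall s, phi s = a * u (f s) + b) /\ t = a * lce f + b).
  by exists (a * lce f + b), f, a, b.
have an : a' != 0 by rewrite gt_eqF.
rewrite (lce_affine hf hf' (a := a / a') (b := (b - b') / a')); first by field.
  exact: divr_gt0.
move=> s; have e := ephi' s; rewrite ephi in e.
have -> : u (f' s) = (a * u (f s) + b - b') / a' by rewrite e; field.
by field.
Qed.

Lemma lce_B0_u f : act f -> lce_B0 (fun s => u (f s)) = lce f.
Proof.
move=> hf; rewrite (lce_B0E (a := 1) (b := 0) hf ltr01) ?mul1r ?addr0 // => s.
by rewrite mul1r addr0.
Qed.

Lemma lce_B0_const_linear : const_linear Sig lce_B0.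
Proof.
move=> phi a b hphi a0.
have [f [c [d [hf [c0 ephi]]]]] := B0_affine_rep HSig Hconv Haff Hz0 Hz1 Hz01 hphi.
rewrite (lce_B0E hf c0 ephi).
have [-> | an] := eqVneq a 0.
  rewrite (lce_B0E (a := 1) (b := b - u z0) (cact Hz0) ltr01) ?lce_cst //; first by ring.
  by move=> s; rewrite /cst; ring.
have ap : 0 < a by rewrite lt_neqAle eq_sym an a0.
rewrite (lce_B0E (a := a * c) (b := a * d + b) hf (mulr_gt0 ap c0)); first by ring.
by move=> s; rewrite ephi; ring.
Qed.

Lemma lce_B0_monotonic : monotonic Sig lce_B0.
Proof.
move=> phi psi hphi hpsi le.
have [K1 [K10 hK1]] := simple_bounded hphi; have [K2 [K20 hK2]] := simple_bounded hpsi.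
have K0 : 0 < K1 + K2 by apply: addr_gt0.
have hK1' s : `|phi s| <= K1 + K2 by apply: le_trans (hK1 s) _; rewrite lerDl ltW.
have hK2' s : `|psi s| <= K1 + K2 by apply: le_trans (hK2 s) _; rewrite lerDr ltW.
have [f hf ephi] := B0_affine_u HSig Hconv Haff Hz0 Hz1 Hz01 hphi K0 hK1'.
have [g hg epsi] := B0_affine_u HSig Hconv Haff Hz0 Hz1 Hz01 hpsi K0 hK2'.
have c0 : 0 < 2 * (K1 + K2) / (u z1 - u z0).
  by apply: divr_gt0; [apply: mulr_gt0 | rewrite subr_gt0].
move: c0 ephi epsi; move: (2 * (K1 + K2) / (u z1 - u z0)) => c.
move: (- (K1 + K2) - c * u z0) => d c0 ephi epsi.
rewrite (lce_B0E hf c0 ephi) (lce_B0E hg c0 epsi) lerD2r ler_pM2l //.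
by apply: lce_mono => // s; have := le s; rewrite ephi epsi lerD2r ler_pM2l.
Qed.

Lemma lower_functional : exists I, const_linear Sig I /\ monotonic Sig I /\
  forall h, act h -> lower_ce X P u h (I (fun s => u (h s))).
Proof.
exists lce_B0; split; first exact: lce_B0_const_linear.
split; first exact: lce_B0_monotonic.
by move=> h hh; rewrite lce_B0_u //; apply: lceP.
Qed.

End LowerCertaintyEquivalent.

(** * From the axioms to the representation *)

Section Sufficiency.
Variables (S : Type) (Sig : (S -> Prop) -> Prop) (V : lmodType Real) (X : V -> Prop)
  (P : (S -> V) -> (S -> V) -> Prop).
Hypotheses (HSig : is_algebra Sig) (Hconv : convex_set X).
Local Notation act := (is_act Sig X).

Lemma A1_inhabited : A1 Sig X P -> inhabited S.
Proof.
move=> [asym [_ [[x [y [hx [hy hxy]]]] _]]]; apply: NNPP => noS.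
have e : cst S x = cst S y.
  by apply: functional_extensionality => s; case: noS; constructor.
by move: hxy; rewrite e => hyy; apply: (asym _ _ (act_cst HSig hy) (act_cst HSig hy) hyy hyy).
Qed.

Lemma constant_utility : A1 Sig X P -> A2 Sig X P -> A3 Sig X P ->
  exists u, affine_on X u /\ forall x y, X x -> X y -> (P (cst S x) (cst S y) <-> u y < u x).
Proof.
move=> [asym [trans [nontriv neg]]] HA2 HA3.
apply: (vnm_utility (R := fun x y => P (cst S x) (cst S y)) Hconv) => //.
- by move=> x y hx hy; apply: asym; apply: act_cst.
- by move=> x y z hx hy hz; apply: trans; apply: act_cst.
- by move=> x y z hx hy hz; exact (HA2 _ _ _ (act_cst HSig hx) (act_cst HSig hy) (act_cst HSig hz)).1.
- by move=> x y z hx hy hz; exact (HA2 _ _ _ (act_cst HSig hx) (act_cst HSig hy) (act_cst HSig hz)).2.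
- by move=> x y z a hx hy hz ha; exact (HA3 _ _ _ _ (act_cst HSig hx) (act_cst HSig hy) hz ha).
- by have [x [y [hx [hy hxy]]]] := nontriv; exists y, x.
Qed.

Section GivenUtility.
Variable u : V -> Real.
Hypothesis Haff : affine_on X u.

(* Io is the conjugate of the lower functional of the converse preference with utility -u. *)
Lemma upper_functional (s0 : S) (z0 z1 : V) :
  A1 Sig X P -> A2 Sig X P -> A3 Sig X P -> A5 Sig X P ->
  (forall x y, X x -> X y -> (P (cst S x) (cst S y) <-> u y < u x)) ->
  X z0 -> X z1 -> u z0 < u z1 ->
  exists I, const_linear Sig I /\ monotonic Sig I /\
    forall h, act h -> upper_ce X P u h (I (fun s => u (h s))).
Proof.
move=> HA1 HA2 HA3 HA5 Hcst Hz0 Hz1 Hz01.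
have Hcst' x y : X x -> X y -> (converse P (cst S x) (cst S y) <-> - u y < - u x).
  by move=> hx hy; rewrite ltrN2; apply: Hcst.
have Hz10 : - u z1 < - u z0 by rewrite ltrN2.
have [I [Icl [Imon Ice]]] := lower_functional s0 HSig Hconv (A1_converse HA1)
  (A2_converse HA2) (A3_converse HA3) (A5_converse HA5) (affine_onN Haff) Hcst' Hz1 Hz0 Hz10.
exists (conjugate I); split; first exact: conjugate_const_linear.
split; first exact: conjugate_monotonic.
by move=> h hh; apply: lower_ce_converse; apply: Ice.
Qed.

Section Characterization.
Variables (p o : (S -> V) -> Real).
Hypothesis lower : forall h, act h -> lower_ce X P u h (p h).
Hypothesis upper : forall h, act h -> upper_ce X P u h (o h).

Lemma incomp_cst_ce f x : act f -> X x -> (incomp P f (cst S x) <-> p f <= u x <= o f).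
Proof.
move=> hf hx; rewrite /incomp ((lower hf).2 x hx) ((upper hf).2 x hx) !leNgt.
by split => [[/negP -> /negP ->] | /andP [/negP ? /negP ?]].
Qed.

Hypothesis HA1 : A1 Sig X P.

(* A constant strictly between o f and p f would be both below and above f. *)
Lemma lower_le_upper f : act f -> p f <= o f.
Proof.
move=> hf; rewrite leNgt; apply/negP => op; have [asym _] := HA1.
have [|x hx ex] := u_range_between Hconv Haff (upper hf).1 (lower hf).1 (t := (p f + o f) / 2).
  by apply/andP; split; lra.
have hPf : P f (cst S x) by apply/((lower hf).2 x hx); rewrite ex; lra.
have hPx : P (cst S x) f by apply/((upper hf).2 x hx); rewrite ex; lra.
exact: asym _ _ hf (act_cst HSig hx) hPf hPx.
Qed.

Hypotheses (HA6 : A6 Sig X P) (HA7 : A7 Sig X P).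

Lemma incomp_of_ce_le f g : act f -> act g -> p g <= p f -> o f <= o g -> incomp P f g.
Proof.
move=> hf hg pgf ofg; apply: (HA6 hf hg) => x hx /(incomp_cst_ce hf hx) /andP [pf fo].
by apply/(incomp_cst_ce hg hx); rewrite (le_trans pgf pf) (le_trans fo ofg).
Qed.

Lemma pref_iff_ce f g : act f -> act g -> (P f g <-> p g < p f /\ o g < o f).
Proof.
move=> hf hg; have [_ [trans _]] := HA1.
split => [fg | [pgf ogf]].
  have pgf : p g <= p f.
    rewrite leNgt; apply/negP => lt; have [x hx ex] := (lower hf).1.
    have : P f (cst S x).
      by apply: (trans _ _ _ hf hg (act_cst HSig hx) fg); apply/((lower hg).2 x hx); rewrite ex.
    by move/((lower hf).2 x hx); rewrite ex ltxx.
  have ogf : o g <= o f.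
    rewrite leNgt; apply/negP => lt; have [x hx ex] := (upper hg).1.
    have : P (cst S x) g.
      by apply: (trans _ _ _ (act_cst HSig hx) hf hg _ fg); apply/((upper hf).2 x hx); rewrite ex.
    by move/((upper hg).2 x hx); rewrite ex ltxx.
  rewrite !lt_neqAle pgf ogf !andbT; split; apply/eqP => e.
    have pfg : p f <= p g by rewrite e.
    by case: (incomp_of_ce_le hg hf pfg ogf) => _ /(_ fg).
  have ofg : o f <= o g by rewrite e.
  by case: (incomp_of_ce_le hf hg pgf ofg) => /(_ fg).
have [xo hxo exo] := (upper hf).1; have [yp hyp eyp] := (lower hg).1.
apply: (HA7 hf hg hxo hyp).
- by apply/(incomp_cst_ce hf hxo); rewrite exo lexx andbT; apply: lower_le_upper.
- by apply/((upper hg).2 xo hxo); rewrite exo.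
- by apply/(incomp_cst_ce hg hyp); rewrite eyp lexx; apply: lower_le_upper.
- by apply/((lower hf).2 yp hyp); rewrite eyp.
Qed.

End Characterization.
End GivenUtility.

Lemma axioms_represented : A1 Sig X P -> A2 Sig X P -> A3 Sig X P -> A5 Sig X P ->
  A6 Sig X P -> A7 Sig X P -> exists u Ip Io, represents Sig X P u Ip Io.
Proof.
move=> HA1 HA2 HA3 HA5 HA6 HA7; have [s0] := A1_inhabited HA1.
have [u [Haff Hcst]] := constant_utility HA1 HA2 HA3.
have [z0 [z1 [hz0 [hz1 z01]]]] : exists z0 z1, X z0 /\ X z1 /\ u z0 < u z1.
  by have [_ [_ [[x [y [hx [hy /(Hcst _ _ hx hy) yx]]]] _]]] := HA1; exists y, x.
have [Ip [Ipcl [Ipmon lower]]] :=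
  lower_functional s0 HSig Hconv HA1 HA2 HA3 HA5 Haff Hcst hz0 hz1 z01.
have [Io [Iocl [Iomon upper]]] := upper_functional Haff s0 HA1 HA2 HA3 HA5 Hcst hz0 hz1 z01.
exists u, Ip, Io; split => //.
split; first by exists z0, z1; split => //; split => // e; move: z01; rewrite e ltxx.
do 4 (split; first by []).
pose p h := Ip (fun s => u (h s)); pose o h := Io (fun s => u (h s)).
split; first by move=> h hh; exact: (lower_le_upper (p := p) (o := o) Haff lower upper HA1 hh).
by move=> f g hf hg; exact: (pref_iff_ce (p := p) (o := o) Haff lower upper HA1 HA6 HA7 hf hg).
Qed.

End Sufficiency.

(** * From the representation to the axioms *)

Section Functional.
Variables (S : Type) (Sig : (S -> Prop) -> Prop) (I : (S -> Real) -> Real).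
Hypotheses (HSig : is_algebra Sig) (Icl : const_linear Sig I) (Imon : monotonic Sig I).

Lemma const_linear_cst b : I (fun _ => b) = b.
Proof.
have := Icl b (simple_cst HSig (0 : Real)) (lexx 0).
have -> : (fun s : S => 0 * (fun _ => 0 : Real) s + b) = (fun _ => b).
  by apply: functional_extensionality => s; rewrite mul0r add0r.
by rewrite mul0r add0r.
Qed.

Lemma const_linear_inhabited : inhabited S.
Proof.
apply: NNPP => noS; have e : (fun _ : S => 0 : Real) = (fun _ => 1).
  by apply: functional_extensionality => s; case: noS; constructor.
by have := const_linear_cst 1; rewrite -e const_linear_cst => /eqP; rewrite eq_sym oner_eq0.
Qed.

Lemma const_linear_shift phi psi (c : Real) : B0 Sig phi -> B0 Sig psi ->
  (forall s, phi s <= psi s + c) -> I phi <= I psi + c.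
Proof.
move=> hphi hpsi le.
have hpsi' : B0 Sig (fun s => 1 * psi s + c) by apply: (simple_comp HSig (fun v => 1 * v + c)).
have le' s : phi s <= 1 * psi s + c by rewrite mul1r.
by have := Imon hpsi' hphi le'; rewrite Icl ?ler01 // mul1r.
Qed.

(* I is 1-Lipschitz in the sup norm, so its values along a mixture are continuous. *)
Lemma mix_open p q (c : Real) : B0 Sig p -> B0 Sig q ->
  open_in_unit (fun a => c < I (fun s => a * p s + (1 - a) * q s)) /\
  open_in_unit (fun a => I (fun s => a * p s + (1 - a) * q s) < c).
Proof.
move=> hp hq.
have [K [K0 hK]] := simple_bounded (simple_comp2 HSig (fun v w => v - w) hp hq).
have hB a : B0 Sig (fun s => a * p s + (1 - a) * q s).
  exact: (simple_comp2 HSig (fun v w => a * v + (1 - a) * w) hp hq).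
have lip a b : I (fun s => b * p s + (1 - b) * q s) <=
    I (fun s => a * p s + (1 - a) * q s) + `|b - a| * K.
  apply: const_linear_shift => // s.
  have -> : b * p s + (1 - b) * q s = a * p s + (1 - a) * q s + (b - a) * (p s - q s) by ring.
  by rewrite lerD2l; apply: le_trans (ler_norm _) _; rewrite normrM ler_wpM2l.
split=> a ha lt.
- exists ((I (fun s => a * p s + (1 - a) * q s) - c) / K); split.
    by apply: divr_gt0 => //; rewrite subr_gt0.
  move=> b hb; rewrite ltr_pdivlMr // => hbe; have := lip b a; rewrite distrC; lra.
- exists ((c - I (fun s => a * p s + (1 - a) * q s)) / K); split.
    by apply: divr_gt0 => //; rewrite subr_gt0.
  move=> b hb; rewrite ltr_pdivlMr // => hbe; have := lip a b; lra.
Qed.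

End Functional.

Section Necessity.
Variables (S : Type) (Sig : (S -> Prop) -> Prop) (V : lmodType Real) (X : V -> Prop)
  (P : (S -> V) -> (S -> V) -> Prop) (u : V -> Real) (Ip Io : (S -> Real) -> Real).
Hypotheses (HSig : is_algebra Sig) (Hconv : convex_set X).
Hypotheses (Haff : affine_on X u) (Hnc : nonconstant_on X u).
Hypotheses (Ipcl : const_linear Sig Ip) (Ipmon : monotonic Sig Ip).
Hypotheses (Iocl : const_linear Sig Io) (Iomon : monotonic Sig Io).
Hypothesis Hle : forall h, is_act Sig X h -> Ip (fun s => u (h s)) <= Io (fun s => u (h s)).
Hypothesis Hiff : forall f g, is_act Sig X f -> is_act Sig X g ->
  (P f g <-> Ip (fun s => u (g s)) < Ip (fun s => u (f s)) /\
             Io (fun s => u (g s)) < Io (fun s => u (f s))).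
Local Notation act := (is_act Sig X).
Local Notation cact := (act_cst HSig).

Lemma rep_cst x y : X x -> X y -> (P (cst S x) (cst S y) <-> u y < u x).
Proof.
move=> hx hy; rewrite (Hiff (cact hx) (cact hy)) /cst.
rewrite !(const_linear_cst HSig Ipcl) !(const_linear_cst HSig Iocl); tauto.
Qed.

Lemma functional_u_range I h : const_linear Sig I -> monotonic Sig I -> act h ->
  u_range X u (I (fun s => u (h s))).
Proof.
move=> Icl Imon hh; have [s0] := const_linear_inhabited HSig Icl; have [hs hX] := hh.
have [sw hsw] := simple_argmin u s0 hs; have [sb hsb] := simple_argmax u s0 hs.
apply: (u_range_between Hconv Haff (a := u (h sw)) (b := u (h sb))).
- by exists (h sw) => //; apply: hX.
- by exists (h sb) => //; apply: hX.
have hu := B0_comp_act HSig u hh.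
apply/andP; split; rewrite -(const_linear_cst HSig Icl (u (h _))); apply: Imon => //;
  exact: simple_cst.
Qed.

Lemma rep_lower_ce h : act h -> lower_ce X P u h (Ip (fun s => u (h s))).
Proof.
move=> hh; split; first exact: functional_u_range.
move=> x hx; rewrite (Hiff hh (cact hx)) /cst (const_linear_cst HSig Ipcl).
rewrite (const_linear_cst HSig Iocl); have := Hle hh.
by split => [[] // | lt]; split => //; apply: lt_le_trans lt _.
Qed.

Lemma rep_upper_ce h : act h -> upper_ce X P u h (Io (fun s => u (h s))).
Proof.
move=> hh; split; first exact: functional_u_range.
move=> x hx; rewrite (Hiff (cact hx) hh) /cst (const_linear_cst HSig Ipcl).
rewrite (const_linear_cst HSig Iocl); have := Hle hh.
by split => [[] // | lt]; split => //; apply: le_lt_trans _ lt.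
Qed.

Lemma rep_A1 : A1 Sig X P.
Proof.
split.
  move=> f g hf hg /(Hiff hf hg) [lt _] /(Hiff hg hf) [lt' _].
  by move: (lt_trans lt lt'); rewrite ltxx.
split.
  move=> f g h hf hg hh /(Hiff hf hg) [lt1 lt2] /(Hiff hg hh) [lt3 lt4].
  by apply/(Hiff hf hh); split; [apply: lt_trans lt3 lt1 | apply: lt_trans lt4 lt2].
split.
  have [x0 [x1 [hx0 [hx1 lt]]]] := nonconstant_lt Hnc.
  by exists x1, x0; split => //; split => //; apply/rep_cst.
move=> x y z hx hy hz /(rep_cst hx hy) lt.
have [le | gt] := lerP (u x) (u z); last by left; apply/rep_cst.
by right; apply/rep_cst => //; apply: lt_le_trans lt le.
Qed.

Lemma rep_A2 : A2 Sig X P.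
Proof.
move=> f g h hf hg hh.
have hpf := B0_comp_act HSig u hf; have hpg := B0_comp_act HSig u hg.
have hmix a : 0 <= a <= 1 ->
    (fun s => u (mix a f g s)) = (fun s => a * u (f s) + (1 - a) * u (g s)).
  by move=> ha; apply: functional_extensionality; apply: (u_mix Haff hf hg ha).
split.
- apply: (open_in_unit_ext (B := fun a =>
      Ip (fun s => u (h s)) < Ip (fun s => a * u (f s) + (1 - a) * u (g s)) /\
      Io (fun s => u (h s)) < Io (fun s => a * u (f s) + (1 - a) * u (g s)))).
    by move=> a ha; rewrite (Hiff (act_mix HSig Hconv hf hg ha) hh) !hmix.
  by apply: open_in_unit_and; [apply: (mix_open HSig Ipcl Ipmon _ hpf hpg).1 |
    apply: (mix_open HSig Iocl Iomon _ hpf hpg).1].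
- apply: (open_in_unit_ext (B := fun a =>
      Ip (fun s => a * u (f s) + (1 - a) * u (g s)) < Ip (fun s => u (h s)) /\
      Io (fun s => a * u (f s) + (1 - a) * u (g s)) < Io (fun s => u (h s)))).
    by move=> a ha; rewrite (Hiff hh (act_mix HSig Hconv hf hg ha)) !hmix.
  by apply: open_in_unit_and; [apply: (mix_open HSig Ipcl Ipmon _ hpf hpg).2 |
    apply: (mix_open HSig Iocl Iomon _ hpf hpg).2].
Qed.

Lemma rep_A3 : A3 Sig X P.
Proof.
move=> f g x a hf hg hx ha; have [a0 a1] := andP ha.
have ha' : 0 <= a <= 1 by rewrite !ltW.
have a0' := ltW a0.
have hu h : act h ->
    (fun s => u (mix a h (cst S x) s)) = (fun s => a * u (h s) + (1 - a) * u x).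
  by move=> hh; apply: functional_extensionality; apply: (u_mix_cst Haff hh hx ha').
rewrite (Hiff hf hg) (Hiff (act_mix_cst HSig Hconv hf hx ha') (act_mix_cst HSig Hconv hg hx ha')).
rewrite !hu // (Ipcl _ (B0_comp_act HSig u hf) a0') (Ipcl _ (B0_comp_act HSig u hg) a0').
rewrite (Iocl _ (B0_comp_act HSig u hf) a0') (Iocl _ (B0_comp_act HSig u hg) a0').
by rewrite !ltrD2r !ltr_pM2l.
Qed.

Lemma rep_A5 : A5 Sig X P.
Proof.
move=> f g hf hg hs.
have lt s : u (g s) < u (f s) by apply/rep_cst => //; [case: hf | case: hg].
have [s0] := const_linear_inhabited HSig Ipcl.
have hd : B0 Sig (fun s => u (f s) - u (g s)).
  by apply: (simple_comp2 HSig (fun v w => u v - u w)); [case: hf | case: hg].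
have [sm hsm] := simple_argmin id s0 hd.
have gap : 0 < u (f sm) - u (g sm) by rewrite subr_gt0.
have le s : u (g s) <= u (f s) + - (u (f sm) - u (g sm)) by have := hsm s; rewrite /=; lra.
have hgf := B0_comp_act HSig u hg; have hff := B0_comp_act HSig u hf.
by apply/(Hiff hf hg); split;
  [have := const_linear_shift HSig Ipcl Ipmon hgf hff le | have := const_linear_shift HSig Iocl Iomon hgf hff le];
  lra.
Qed.

Lemma rep_A6 : A6 Sig X P.
Proof.
move=> f g hf hg H.
have ince := incomp_cst_ce (p := fun h => Ip (fun s => u (h s)))
  (o := fun h => Io (fun s => u (h s))) rep_lower_ce rep_upper_ce.
have [[xp hxp ep] _] := rep_lower_ce hf; have [[xo hxo eo] _] := rep_upper_ce hf.
have hfp : incomp P f (cst S xp) by apply/(ince _ _ hf hxp); rewrite /= ep lexx Hle.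
have hfo : incomp P f (cst S xo) by apply/(ince _ _ hf hxo); rewrite /= eo lexx Hle.
have /andP [gp pg] := (ince _ _ hg hxp).1 (H xp hxp hfp).
have /andP [go og] := (ince _ _ hg hxo).1 (H xo hxo hfo).
rewrite /= ep in gp pg; rewrite /= eo in go og.
by rewrite /incomp (Hiff hf hg) (Hiff hg hf); split => [[_ ?] | [? _]]; lra.
Qed.

Lemma rep_A7 : A7 Sig X P.
Proof.
move=> f g x y hf hg hx hy fx xg gy fy.
have ince := incomp_cst_ce (p := fun h => Ip (fun s => u (h s)))
  (o := fun h => Io (fun s => u (h s))) rep_lower_ce rep_upper_ce.
move: fx gy => /(ince _ _ hf hx) /andP [fx xf] /(ince _ _ hg hy) /andP [gy yg].
move: xg fy => /((rep_upper_ce hg).2 x hx) xg /((rep_lower_ce hf).2 y hy) fy.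
rewrite /= in fx xf gy yg.
by apply/(Hiff hf hg); split; lra.
Qed.

End Necessity.

Lemma represents_axioms (S : Type) (Sig : (S -> Prop) -> Prop) (V : lmodType Real)
  (X : V -> Prop) (P : (S -> V) -> (S -> V) -> Prop) (u : V -> Real)
  (Ip Io : (S -> Real) -> Real) :
  is_algebra Sig -> convex_set X -> represents Sig X P u Ip Io ->
  A1 Sig X P /\ A2 Sig X P /\ A3 Sig X P /\ A5 Sig X P /\ A6 Sig X P /\ A7 Sig X P.
Proof.
move=> HSig Hconv [Haff [Hnc [Ipcl [Ipmon [Iocl [Iomon [Hle Hiff]]]]]]].
split; first exact: rep_A1 HSig Hnc Ipcl Iocl Hiff.
split; first exact: rep_A2 HSig Hconv Haff Ipcl Ipmon Iocl Iomon Hiff.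
split; first exact: rep_A3 HSig Hconv Haff Ipcl Iocl Hiff.
split; first exact: rep_A5 HSig Ipcl Ipmon Iocl Iomon Hiff.
split; first exact: rep_A6 HSig Hconv Haff Ipcl Ipmon Iocl Iomon Hle Hiff.
exact: rep_A7 HSig Hconv Haff Ipcl Ipmon Iocl Iomon Hle Hiff.
Qed.

(** * Uniqueness *)

Section Uniqueness.
Variables (S : Type) (Sig : (S -> Prop) -> Prop) (V : lmodType Real) (X : V -> Prop)
  (P : (S -> V) -> (S -> V) -> Prop).
Hypotheses (HSig : is_algebra Sig) (Hconv : convex_set X).

Lemma represents_utility_unique u u' Ip Io Ip' Io' :
  represents Sig X P u Ip Io -> represents Sig X P u' Ip' Io' ->
  exists a b : Real, 0 < a /\ forall x, X x -> u' x = a * u x + b.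
Proof.
move=> [Haff [Hnc [Ipcl [_ [Iocl [_ [_ Hiff]]]]]]] [Haff' [_ [Ipcl' [_ [Iocl' [_ [_ Hiff']]]]]]].
have same x y : X x -> X y -> (u x < u y <-> u' x < u' y).
  move=> hx hy; rewrite -(rep_cst HSig Ipcl Iocl Hiff hy hx).
  by rewrite (rep_cst HSig Ipcl' Iocl' Hiff' hy hx).
have [x0 [x1 [hx0 [hx1 lt01]]]] := nonconstant_lt Hnc.
have key := affine_same_order Hconv Haff Haff' same hx0 hx1 lt01.
have lt01' : u' x0 < u' x1 by apply/same.
exists ((u' x1 - u' x0) / (u x1 - u x0)), (u' x0 - (u' x1 - u' x0) / (u x1 - u x0) * u x0).
split; first by apply: divr_gt0; rewrite subr_gt0.
by move=> z hz; rewrite (key z hz); field; rewrite subr_eq0 gt_eqF.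
Qed.

(* Both pairs agree on every u(h) by uniqueness of certainty equivalents, hence on B0. *)
Lemma represents_functionals_unique u Ip Io Ip' Io' :
  represents Sig X P u Ip Io -> represents Sig X P u Ip' Io' ->
  forall phi, B0 Sig phi -> Ip' phi = Ip phi /\ Io' phi = Io phi.
Proof.
move=> [Haff [Hnc [Ipcl [Ipmon [Iocl [Iomon [Hle Hiff]]]]]]].
move=> [_ [_ [Ipcl' [Ipmon' [Iocl' [Iomon' [Hle' Hiff']]]]]]] phi hphi.
have [x0 [x1 [hx0 [hx1 lt01]]]] := nonconstant_lt Hnc.
have [h [c [d [hh [c0 ephi]]]]] := B0_affine_rep HSig Hconv Haff hx0 hx1 lt01 hphi.
have -> : phi = (fun s => c * u (h s) + d) by apply: functional_extensionality.
have hu := B0_comp_act HSig u hh; have c0' := ltW c0.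
rewrite Ipcl' // Ipcl // Iocl' // Iocl //.
rewrite (lower_ce_unique (rep_lower_ce HSig Hconv Haff Ipcl' Ipmon' Iocl' Hle' Hiff' hh)
  (rep_lower_ce HSig Hconv Haff Ipcl Ipmon Iocl Hle Hiff hh)).
by rewrite (upper_ce_unique (rep_upper_ce HSig Hconv Haff Ipcl' Iocl' Iomon' Hle' Hiff' hh)
  (rep_upper_ce HSig Hconv Haff Ipcl Iocl Iomon Hle Hiff hh)).
Qed.

End Uniqueness.

Theorem theorem4 (S : Type) (Sig : (S -> Prop) -> Prop) (V : lmodType Real)
  (X : V -> Prop) (P : (S -> V) -> (S -> V) -> Prop) :
  is_algebra Sig -> convex_set X -> non_singleton X ->
  ((A1 Sig X P /\ A2 Sig X P /\ A3 Sig X P /\ A5 Sig X P /\ A6 Sig X P /\ A7 Sig X P)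
   <->
   exists (u : V -> Real) (Ip Io : (S -> Real) -> Real),
     represents Sig X P u Ip Io /\
     (* u is unique up to positive affine transformation *)
     (forall u' Ip' Io', represents Sig X P u' Ip' Io' ->
        exists a b : Real, 0 < a /\ forall x, X x -> u' x = a * u x + b) /\
     (* given u, the pair (Ip, Io) is unique (as functionals on B0) *)
     (forall Ip' Io', represents Sig X P u Ip' Io' ->
        forall phi, B0 Sig phi -> Ip' phi = Ip phi /\ Io' phi = Io phi)).
Proof.
move=> HSig Hconv _; split => [[HA1 [HA2 [HA3 [HA5 [HA6 HA7]]]]] | [u [Ip [Io [Hr _]]]]].
  have [u [Ip [Io Hr]]] := axioms_represented HSig Hconv HA1 HA2 HA3 HA5 HA6 HA7.
  exists u, Ip, Io; split => //; split => [u' Ip' Io' | Ip' Io'] Hr'.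
    exact (represents_utility_unique HSig Hconv Hr Hr').
  by move=> phi /(represents_functionals_unique HSig Hconv Hr Hr').
exact: represents_axioms HSig Hconv Hr.
Qed.
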